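(* Let $n\ge 2$, $0\le\alpha<1$ and $\beta=1-\alpha$. Then for all $x,y\in\mathbb{R}^n\setminus\{0\}$, $$k_\alpha(x,y)\le\frac{|x|^\beta+|y|^\beta}{\beta}.$$
   Context: $k_\alpha(x,y)=\inf_\gamma\int_\gamma|z|^{-\alpha}|dz|$, the infimum over all rectifiable paths $\gamma$ in $\mathbb{R}^n\setminus\{0\}$ joining $x$ and $y$. *)

From HB Require Import structures.
From mathcomp Require Import all_boot all_order all_algebra.
From mathcomp Require Import all_classical all_reals all_analysis.
Set Implicit Arguments. Unset Strict Implicit. Unset Printing Implicit Defensive.
Import Order.TTheory GRing.Theory Num.Theory.
Local Open Scope classical_set_scope.
Local Open Scope ring_scope.

Definition enorm {R : realType} {n : nat} (z : 'rV[R]_n) : R :=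
  Num.sqrt (\sum_(i < n) z ord0 i ^+ 2).

(* s is a partition a = t_0 < t_1 < ... < t_m = b of [a,b] (t_0 = a not listed) *)
Definition is_partition {R : realType} (a b : R) (s : seq R) : Prop :=
  path (fun u v => u < v) a s /\ last a s = b.

Definition chord_sum {R : realType} {n : nat} (g : R -> 'rV[R]_n)
  (a : R) (s : seq R) : R :=
  \sum_(d <- pairmap (fun u v => enorm (g v - g u)) a s) d.

Definition path_length {R : realType} {n : nat} (g : R -> 'rV[R]_n) (a b : R)
  : \bar R :=
  ereal_sup [set (chord_sum g a s)%:E | s in [set s | is_partition a b s]].

Definition arclen {R : realType} {n : nat} (g : R -> 'rV[R]_n) (t : R) : R :=
  fine (path_length g 0 t).

Definition admissible_path {R : realType} {n : nat} (x y : 'rV[R]_n)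
  (g : R -> 'rV[R]_n) : Prop :=
  [/\ g 0 = x, g 1 = y,
      (forall t, 0 <= t <= 1 -> g t != 0),
      (forall t, 0 <= t <= 1 -> forall e : R, 0 < e -> exists2 d : R, 0 < d &
          forall u, 0 <= u <= 1 -> `|u - t| < d -> enorm (g u - g t) < e) &
      (path_length g 0 1 < +oo)%E].

Definition lower_sum {R : realType} {n : nat} (f : 'rV[R]_n -> R)
  (g : R -> 'rV[R]_n) (s : seq R) : R :=
  \sum_(d <- pairmap (fun u v =>
       inf [set f (g w) | w in [set w | u <= w <= v]] * (arclen g v - arclen g u))
       0 s) d.

(* line integral  int_g f |dz|  (Riemann-Stieltjes integral w.r.t. arc length,
   as the supremum of lower sums; f continuous, g rectifiable) *)
Definition line_integral {R : realType} {n : nat} (f : 'rV[R]_n -> R)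
  (g : R -> 'rV[R]_n) : \bar R :=
  ereal_sup [set (lower_sum f g s)%:E | s in [set s | is_partition 0 1 s]].

Definition k_alpha {R : realType} {n : nat} (alpha : R) (x y : 'rV[R]_n)
  : \bar R :=
  ereal_inf [set line_integral (fun z => powR (enorm z) (- alpha)) g
            | g in [set g | admissible_path x y g]].

(* Since n >= 2 there is p != 0 with x . p = 0 and p . y >= 0.  For 0 < e <= 1 join x to y by
   the polygon x -> e x -> e p -> e y -> y.  On the radial legs |z|^(-alpha) |dz| has the exact
   primitive r^(1-alpha) / (1-alpha), so they cost at most (|x|^beta + |y|^beta) / beta; the two
   middle chords stay at distance e min(|x|, |p|, |y|) / 2 from the origin, so by homogeneity they
   cost O(e^beta), which vanishes as e -> 0.
   Line integrals are bounded through certificates: a Lipschitz arclength function S together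
   with a primitive Phi dominating the lower Stieltjes sums of the weight against dS.  Both are
   local and additive, so certificates of consecutive pieces glue. *)

From HB Require Import structures.
From mathcomp Require Import all_boot all_order all_algebra.
From mathcomp Require Import all_classical all_reals all_analysis.
From mathcomp Require Import ring lra.
Import Order.TTheory GRing.Theory Num.Theory.
Set Implicit Arguments. Unset Strict Implicit. Unset Printing Implicit Defensive.
Local Open Scope classical_set_scope.
Local Open Scope ring_scope.

Section Euclid.
Context {R : realType} {n : nat}.
Implicit Types (a b c : 'rV[R]_n) (k : R).

Definition dot a b : R := \sum_(i < n) a ord0 i * b ord0 i.

Lemma dotC a b : dot a b = dot b a.
Proof. by apply: eq_bigr => i _; rewrite mulrC. Qed.

Lemma dotDl a b c : dot (a + b) c = dot a c + dot b c.
Proof. by rewrite /dot -big_split; apply: eq_bigr => i _; rewrite !mxE mulrDl. Qed.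

Lemma dotZl k a b : dot (k *: a) b = k * dot a b.
Proof. by rewrite /dot mulr_sumr; apply: eq_bigr => i _; rewrite !mxE mulrA. Qed.

Lemma dotNl a b : dot (- a) b = - dot a b.
Proof. by rewrite -scaleN1r dotZl mulN1r. Qed.

Lemma dotBl a b c : dot (a - b) c = dot a c - dot b c.
Proof. by rewrite dotDl dotNl. Qed.

Lemma dotDr a b c : dot a (b + c) = dot a b + dot a c.
Proof. by rewrite dotC dotDl !(dotC a). Qed.

Lemma dotZr k a b : dot a (k *: b) = k * dot a b.
Proof. by rewrite dotC dotZl dotC. Qed.

Lemma dotBr a b c : dot a (b - c) = dot a b - dot a c.
Proof. by rewrite !(dotC a) dotBl. Qed.

Lemma dotxx_ge0 a : 0 <= dot a a.
Proof. by apply: sumr_ge0 => i _; rewrite -expr2 sqr_ge0. Qed.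

Lemma dotxx_eq0 a : (dot a a == 0) = (a == 0).
Proof.
apply/idP/eqP => [/eqP a0|->]; last by rewrite /dot big1 // => i _; rewrite mxE mul0r.
apply/rowP => i; rewrite mxE; apply/eqP; rewrite -[_ == 0]orbb -mulf_eq0.
by apply/eqP/(psumr_eq0P _ a0) => // j _; rewrite -expr2 sqr_ge0.
Qed.

Lemma enormE a : enorm a = Num.sqrt (dot a a).
Proof. by congr Num.sqrt; apply: eq_bigr => i _; rewrite expr2. Qed.

Lemma enorm_ge0 a : 0 <= enorm a.
Proof. by rewrite enormE sqrtr_ge0. Qed.

Lemma enorm_sqr a : enorm a ^+ 2 = dot a a.
Proof. by rewrite enormE sqr_sqrtr // dotxx_ge0. Qed.

Lemma enorm_gt0 a : (0 < enorm a) = (a != 0).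
Proof. by rewrite enormE sqrtr_gt0 lt_def dotxx_eq0 dotxx_ge0 andbT. Qed.

Lemma enormZ k a : enorm (k *: a) = `|k| * enorm a.
Proof. by rewrite !enormE dotZl dotZr mulrA sqrtrM ?sqr_ge0 // -expr2 sqrtr_sqr. Qed.

Lemma enormN a : enorm (- a) = enorm a.
Proof. by rewrite -scaleN1r enormZ normrN1 mul1r. Qed.

Lemma enormB a b : enorm (a - b) = enorm (b - a).
Proof. by rewrite -enormN opprB. Qed.

Lemma dot_le_enorm a b : dot a b <= enorm a * enorm b.
Proof.
have [->|a0] := eqVneq a 0.
  by rewrite /dot big1 ?mulr_ge0 ?enorm_ge0 // => i _; rewrite mxE mul0r.
have aa0 : 0 < dot a a by rewrite -enorm_sqr exprn_gt0 // enorm_gt0.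
have disc : dot a b ^+ 2 <= dot a a * dot b b.
  have := dotxx_ge0 ((dot a b / dot a a) *: a - b).
  rewrite dotBl !dotBr !dotZl !dotZr (dotC b a).
  have -> : dot a b / dot a a * (dot a b / dot a a * dot a a) - dot a b / dot a a * dot a b
      - (dot a b / dot a a * dot a b - dot b b) = (dot a a * dot b b - dot a b ^+ 2) / dot a a.
    by field; rewrite gt_eqF.
  by rewrite pmulr_lge0 ?invr_gt0 // subr_ge0.
apply: le_trans (ler_norm _) _.
rewrite -sqrtr_sqr !enormE -sqrtrM ?dotxx_ge0 // ler_sqrt //.
by rewrite mulr_ge0 ?dotxx_ge0.
Qed.

Lemma enormD a b : enorm (a + b) <= enorm a + enorm b.
Proof.
rewrite -[enorm a + enorm b]ger0_norm ?addr_ge0 ?enorm_ge0 //.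
rewrite -sqrtr_sqr enormE ler_sqrt ?sqr_ge0 //.
rewrite dotDl !dotDr (dotC b a) sqrrD -!enorm_sqr.
have := dot_le_enorm a b; lra.
Qed.

Lemma enorm_subr_le a b c : enorm (c - a) <= enorm (c - b) + enorm (b - a).
Proof. by rewrite -[c - a](subrKA b) enormD. Qed.

Lemma exists_orthogonal (hn : (2 <= n)%N) (x : 'rV[R]_n) :
  exists2 w : 'rV[R]_n, w != 0 & dot x w = 0.
Proof.
pose i0 := Ordinal (ltnW hn); pose i1 := Ordinal hn.
have dot_delta j : dot x (delta_mx 0 j) = x 0 j.
  rewrite /dot (bigD1 j) //= mxE !eqxx mulr1 big1 ?addr0 // => i /negbTE ij.
  by rewrite mxE ij andbF mulr0.
have [x01|x01] := eqVneq (x 0 i0, x 0 i1) (0, 0).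
  exists (delta_mx 0 i0); last by rewrite dot_delta; case: x01.
  by apply/eqP => /matrixP /(_ 0 i0); rewrite !mxE !eqxx => /eqP; rewrite oner_eq0.
exists (x 0 i1 *: delta_mx 0 i0 - x 0 i0 *: delta_mx 0 i1).
  apply: contra x01 => /eqP /matrixP w0; have := w0 0 i0; have := w0 0 i1.
  by rewrite !mxE !eqxx /= !mulr1 !mulr0 subr0 sub0r => /eqP; rewrite oppr_eq0 => /eqP -> ->.
by rewrite dotBr !dotZr !dot_delta mulrC subrr.
Qed.

Lemma exists_orthogonal_toward (hn : (2 <= n)%N) (x y : 'rV[R]_n) :
  exists2 p : 'rV[R]_n, p != 0 & dot x p = 0 /\ 0 <= dot p y.
Proof.
have [w w0 xw] := exists_orthogonal hn x.
have [wy|wy] := leP 0 (dot w y); first by exists w.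
exists (- w); first by rewrite oppr_eq0.
by rewrite dotC dotNl dotC xw oppr0 dotNl oppr_ge0 ltW.
Qed.

End Euclid.

Section Partitions.
Context {R : realType} {n : nat}.
Implicit Types (g : R -> 'rV[R]_n) (a b t x : R) (s : seq R).

Lemma is_partition_cons a t x s :
  is_partition a t (x :: s) <-> a < x /\ is_partition x t s.
Proof. by rewrite /is_partition /=; split => [[/andP[]]|[-> []]]. Qed.

Lemma is_partition_le a t s : is_partition a t s -> a <= t.
Proof.
elim: s a => [|x s IH] a; first by case=> _ /= ->.
by case/is_partition_cons => ax /IH; apply: le_trans (ltW ax).
Qed.

Lemma is_partition_mem a t s w : is_partition a t s -> w \in a :: s -> a <= w <= t.
Proof.
elim: s a => [|x s IH] a P; first by rewrite mem_seq1 => /eqP ->; rewrite lexx (is_partition_le P).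
rewrite in_cons => /predU1P[->|ws];
  rewrite ?lexx ?(is_partition_le P) //.
case/is_partition_cons: P => ax /IH/(_ ws)/andP[xw ->].
by rewrite (le_trans (ltW ax)).
Qed.

Lemma is_partition_cat a b c s1 s2 :
  is_partition a b s1 -> is_partition b c s2 -> is_partition a c (s1 ++ s2).
Proof. by move=> [p1 l1] [p2 l2]; rewrite /is_partition cat_path last_cat l1 p1. Qed.

Lemma chord_sum_nil g a : chord_sum g a [::] = 0.
Proof. by rewrite /chord_sum big_nil. Qed.

Lemma chord_sum_cons g a x s : chord_sum g a (x :: s) = enorm (g x - g a) + chord_sum g x s.
Proof. by rewrite /chord_sum /= big_cons. Qed.

Lemma chord_sum_cat g a s1 s2 :
  chord_sum g a (s1 ++ s2) = chord_sum g a s1 + chord_sum g (last a s1) s2.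
Proof. by rewrite /chord_sum pairmap_cat big_cat. Qed.

Lemma eq_chord_sum g g' a s : {in a :: s, g =1 g'} -> chord_sum g a s = chord_sum g' a s.
Proof.
elim: s a => [|x s IH] a e; rewrite ?chord_sum_nil // !chord_sum_cons.
rewrite !e ?(mem_head, inE, eqxx, orbT) // IH // => w ws.
by apply: e; rewrite inE ws orbT.
Qed.

End Partitions.

Section Certificates.
Context {R : realType} {n : nat}.
Implicit Types (g : R -> 'rV[R]_n) (S Phi : R -> R) (h : 'rV[R]_n -> R) (a b c K B : R).

Definition chord_majorant g S K a b := forall u v, a <= u -> u <= v -> v <= b ->
  enorm (g v - g u) <= S v - S u <= K * (v - u).

Definition majorant_attained g S a b := forall t, a <= t -> t <= b ->
  exists2 s, is_partition a t s & S t - S a <= chord_sum g a s.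

Definition integral_majorant h g S Phi a b := forall u v, a <= u -> u <= v -> v <= b ->
  forall m, (forall w, u <= w -> w <= v -> m <= h (g w)) -> m * (S v - S u) <= Phi v - Phi u.

(* [S] is an arclength function of the Lipschitz path [g] on [[a, b]], and [Phi] bounds
   from above every lower Stieltjes sum of [h \o g] against [dS]. *)
Definition arc_cert h g S Phi K a b :=
  [/\ chord_majorant g S K a b, majorant_attained g S a b, integral_majorant h g S Phi a b
    & forall t, a <= t -> t <= b -> g t != 0].

Definition arc_integral_le h g a b B :=
  exists K S Phi, arc_cert h g S Phi K a b /\ Phi b - Phi a <= B.

Lemma arc_integral_le_trans h g a b B B' :
  B <= B' -> arc_integral_le h g a b B -> arc_integral_le h g a b B'.
Proof. by move=> BB' [K [S [Phi [C PB]]]]; exists K, S, Phi; split; last exact: le_trans BB'. Qed.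

Lemma split_interval (P : R -> R -> Prop) a b c :
  (forall u v, a <= u -> u <= v -> v <= b -> P u v) ->
  (forall u v, b <= u -> u <= v -> v <= c -> P u v) ->
  (forall u v, u <= b -> b <= v -> P u b -> P b v -> P u v) ->
  forall u v, a <= u -> u <= v -> v <= c -> P u v.
Proof.
move=> P1 P2 P12 u v au uv vc.
have [vb|bv] := leP v b; first exact: P1.
have [ub|bu] := leP u b; last by apply: P2 => //; apply: ltW.
exact: P12 ub (ltW bv) (P1 _ _ au ub (lexx b)) (P2 _ _ (lexx b) (ltW bv) vc).
Qed.

Lemma arc_cert_cat h g S Phi K1 K2 a b c : a <= b -> b <= c ->
  arc_cert h g S Phi K1 a b -> arc_cert h g S Phi K2 b c ->
  arc_cert h g S Phi (Num.max K1 K2) a c.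
Proof.
move=> ab bc [M1 A1 I1 N1] [M2 A2 I2 N2].
have via_b (x y : R) : x - y = (x - b) + (b - y) by ring.
have via_Sb (x y : R) : x - y = (x - S b) + (S b - y) by ring.
have via_Pb (x y : R) : x - y = (x - Phi b) + (Phi b - y) by ring.
split.
- have widen K' u v : K' <= Num.max K1 K2 -> u <= v ->
      enorm (g v - g u) <= S v - S u <= K' * (v - u) ->
      enorm (g v - g u) <= S v - S u <= Num.max K1 K2 * (v - u).
    move=> KK uv /andP[-> SK]; apply: le_trans SK _.
    by rewrite ler_wpM2r ?subr_ge0.
  apply: (split_interval (b := b)) => [u v au uv vb|u v bu uv vc|u v ub bv].
  + by apply: widen (M1 _ _ au uv vb); rewrite ?le_max ?lexx.
  + by apply: widen (M2 _ _ bu uv vc); rewrite ?le_max ?lexx ?orbT.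
  move=> /andP[gub Sub] /andP[gbv Sbv]; apply/andP; split.
    by rewrite (via_Sb (S v)); apply: le_trans (enorm_subr_le _ (g b) _) (lerD gbv gub).
  by rewrite (via_Sb (S v)) (via_b v) mulrDr; apply: lerD Sbv Sub.
- move=> t at_ tc; have [tb|bt] := leP t b; first exact: A1.
  have [s1 p1 h1] := A1 b ab (lexx b); have [s2 p2 h2] := A2 t (ltW bt) tc.
  exists (s1 ++ s2); first exact: is_partition_cat p1 p2.
  by rewrite chord_sum_cat (proj2 p1) (via_Sb (S t)) addrC; apply: lerD h1 h2.
- apply: split_interval I1 I2 _ => u v ub bv Iub Ibv m mlb.
  rewrite (via_Sb (S v)) (via_Pb (Phi v)) mulrDr addrC [X in _ <= X]addrC.
  apply: lerD; first exact: Iub (fun w uw wb => mlb w uw (le_trans wb bv)).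
  exact: Ibv (fun w bw wv => mlb w (le_trans ub bw) wv).
- move=> t at_ tc; have [tb|bt] := leP t b; first exact: N1.
  by apply: N2 => //; apply: ltW.
Qed.

Lemma arc_cert_congr h g g' S S' Phi Phi' K a b c1 c2 :
  (forall t, a <= t -> t <= b -> [/\ g' t = g t, S' t = S t + c1 & Phi' t = Phi t + c2]) ->
  arc_cert h g S Phi K a b -> arc_cert h g' S' Phi' K a b.
Proof.
move=> e [M A I N].
have shift (f : R -> R) c u v : f v + c - (f u + c) = f v - f u by ring.
split.
- move=> u v au uv vb.
  have [gu Su _] := e u au (le_trans uv vb); have [gv Sv _] := e v (le_trans au uv) vb.
  by rewrite gu gv Su Sv shift; apply: M.
- move=> t at_ tb; have [s ps hs] := A t at_ tb; exists s => //.
  have [_ St _] := e t at_ tb; have [_ Sa _] := e a (lexx a) (le_trans at_ tb).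
  rewrite St Sa shift (@eq_chord_sum _ _ g' g) // => w /(is_partition_mem ps)/andP[aw wt].
  by case: (e w aw (le_trans wt tb)).
- move=> u v au uv vb m mlb.
  have [_ Su Pu] := e u au (le_trans uv vb); have [_ Sv Pv] := e v (le_trans au uv) vb.
  rewrite Su Sv Pu Pv !shift; apply: I => // w uw wv.
  have [<- _ _] := e w (le_trans au uw) (le_trans wv vb); exact: mlb.
- by move=> t at_ tb; have [-> _ _] := e t at_ tb; apply: N.
Qed.

Definition glue {T : Type} b (f1 f2 : R -> T) (t : R) : T := if t <= b then f1 t else f2 t.

Lemma glue_l {T : Type} b (f1 f2 : R -> T) t : t <= b -> glue b f1 f2 t = f1 t.
Proof. by rewrite /glue => ->. Qed.

Lemma glue_gt {T : Type} b (f1 f2 : R -> T) t : b < t -> glue b f1 f2 t = f2 t.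
Proof. by rewrite /glue ltNge => /negbTE ->. Qed.

Lemma glue_r {T : Type} b (f1 f2 : R -> T) t : f1 b = f2 b -> b <= t -> glue b f1 f2 t = f2 t.
Proof. by move=> e; rewrite le_eqVlt => /predU1P[<-|/glue_gt //]; rewrite glue_l. Qed.

Lemma arc_integral_le_glue h g1 g2 a b c B1 B2 :
  arc_integral_le h g1 a b B1 -> arc_integral_le h g2 b c B2 ->
  a <= b -> b <= c -> g1 b = g2 b -> arc_integral_le h (glue b g1 g2) a c (B1 + B2).
Proof.
move=> [K1 [S1 [P1 [C1 PB1]]]] [K2 [S2 [P2 [C2 PB2]]]] ab bc g12.
pose S := glue b S1 (fun t => S2 t + (S1 b - S2 b)).
pose P := glue b P1 (fun t => P2 t + (P1 b - P2 b)).
have S12 : S1 b = S2 b + (S1 b - S2 b) by rewrite subrKC.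
have P12 : P1 b = P2 b + (P1 b - P2 b) by rewrite subrKC.
exists (Num.max K1 K2), S, P; split.
  apply: arc_cert_cat ab bc _ _.
    apply: (arc_cert_congr (c1 := 0) (c2 := 0) _ C1) => t _ tb.
    by rewrite /S /P !glue_l // !addr0.
  by apply: arc_cert_congr C2 => t bt _; rewrite /S /P !glue_r.
by rewrite /P glue_r // glue_l //; lra.
Qed.

Lemma chord_sum_le_majorant g S K a b a' t s : chord_majorant g S K a b ->
  is_partition a' t s -> a <= a' -> t <= b -> chord_sum g a' s <= S t - S a'.
Proof.
move=> M; elim: s a' => [|x s IH] a'.
  by case=> _ /= <-; rewrite chord_sum_nil subrr.
case/is_partition_cons => a'x P aa' tb; rewrite chord_sum_cons.
have /andP[gS _] := M a' x aa' (ltW a'x) (le_trans (is_partition_le P) tb).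
by have := IH x P (le_trans aa' (ltW a'x)) tb; lra.
Qed.

Lemma path_length_majorant g S K a b t : chord_majorant g S K a b ->
  majorant_attained g S a b -> a <= t -> t <= b -> path_length g a t = (S t - S a)%:E.
Proof.
move=> M A at_ tb; apply/eqP; rewrite eq_le; apply/andP; split.
  apply: ge_ereal_sup => _ [s ps <-]; rewrite lee_fin.
  exact: chord_sum_le_majorant M ps (lexx a) tb.
have [s ps hs] := A t at_ tb.
by apply: le_ereal_sup_tmp; exists (chord_sum g a s)%:E; [exists s | rewrite lee_fin].
Qed.

Lemma inf_image_le (f : R -> R) (A : set R) w : (forall x, 0 <= f x) -> A w ->
  inf [set f x | x in A] <= f w.
Proof.
move=> f0 Aw; apply: ge_inf; last by exists w.
by exists 0 => _ [x _ <-].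
Qed.

Lemma lower_sum_le_majorant h g S Phi K a t s : (forall z, 0 <= h z) ->
  arc_cert h g S Phi K 0 1 -> is_partition a t s -> 0 <= a -> t <= 1 ->
  \sum_(d <- pairmap (fun u v =>
       inf [set h (g w) | w in [set w | u <= w <= v]] * (arclen g v - arclen g u)) a s) d
  <= Phi t - Phi a.
Proof.
move=> h0 [M A I _]; elim: s a => [|x s IH] a.
  by case=> _ /= <-; rewrite big_nil subrr.
case/is_partition_cons => ax P a0 t1; rewrite /= big_cons.
have x1 := le_trans (is_partition_le P) t1.
have arclenE u : 0 <= u -> u <= 1 -> arclen g u = S u - S 0.
  by move=> u0 u1; rewrite /arclen (path_length_majorant M A u0 u1).
rewrite !arclenE ?(le_trans a0 (ltW ax)) ?(le_trans (ltW ax) x1) //.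
have lb w : a <= w -> w <= x -> inf [set h (g w) | w in [set w | a <= w <= x]] <= h (g w).
  by move=> aw wx; apply: (inf_image_le (f := fun w => h (g w))) => //=; rewrite aw wx.
have := I a x a0 (ltW ax) x1 _ lb; have := IH x P (le_trans a0 (ltW ax)) t1.
have -> : S x - S 0 - (S a - S 0) = S x - S a by ring.
lra.
Qed.

Lemma line_integral_le_cert h g S Phi K : (forall z, 0 <= h z) ->
  arc_cert h g S Phi K 0 1 -> (line_integral h g <= (Phi 1 - Phi 0)%:E)%E.
Proof.
move=> h0 C; apply: ge_ereal_sup => _ [s ps <-]; rewrite lee_fin.
exact: lower_sum_le_majorant h0 C ps (lexx 0) _.
Qed.

Lemma admissible_cert h g S Phi K :
  arc_cert h g S Phi K 0 1 -> admissible_path (g 0) (g 1) g.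
Proof.
move=> [M A _ N]; have K1 : 0 < `|K| + 1 by rewrite ltr_wpDl.
have close u v : 0 <= u -> u <= v -> v <= 1 -> forall e, 0 < e ->
    v - u < e / (`|K| + 1) -> enorm (g v - g u) < e.
  move=> u0 uv v1 e e0; rewrite ltr_pdivlMr // => uve.
  have /andP[gS SK] := M u v u0 uv v1; apply: le_lt_trans gS (le_lt_trans SK _).
  apply: le_lt_trans uve; rewrite mulrC; apply: ler_wpM2l; first by rewrite subr_ge0.
  exact: le_trans (ler_norm K) (ler_wpDr ler01 _).
split => //.
- by move=> t /andP[]; apply: N.
- move=> t /andP[t0 t1] e e0; exists (e / (`|K| + 1)); first by rewrite divr_gt0.
  move=> u /andP[u0 u1]; have [tu|ut] := leP t u.
    by rewrite ger0_norm ?subr_ge0 //; apply: close.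
  by rewrite ltr0_norm ?subr_lt0 // opprB enormB; apply: close => //; apply: ltW.
- by rewrite (path_length_majorant M A ler01 (lexx 1)) ltry.
Qed.

End Certificates.

Definition weight {R : realType} {n : nat} (alpha : R) (z : 'rV[R]_n) : R :=
  powR (enorm z) (- alpha).

Lemma k_alpha_le_arc {R : realType} {n : nat} (alpha B : R) (x y : 'rV[R]_n) g :
  arc_integral_le (weight alpha) g 0 1 B -> g 0 = x -> g 1 = y ->
  (k_alpha alpha x y <= B%:E)%E.
Proof.
move=> [K [S [Phi [C PB]]]] <- <-.
apply: (@le_trans _ _ (line_integral (weight alpha) g)).
  by apply: ereal_inf_lbound; exists g => //; apply: admissible_cert C.
apply: le_trans (line_integral_le_cert _ C) _; first by move=> z; apply: powR_ge0.
by rewrite lee_fin.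
Qed.

Section PowR.
Context {R : realType}.
Implicit Types (alpha x y : R).

Lemma ge0_ler_powRN alpha x y : 0 <= alpha -> 0 < x -> x <= y ->
  powR y (- alpha) <= powR x (- alpha).
Proof.
move=> a0 x0 xy; rewrite !powRN lef_pV2 ?posrE ?powR_gt0 //; last exact: lt_le_trans xy.
by apply: ge0_ler_powR => //; rewrite nnegrE ltW // (lt_le_trans x0).
Qed.

Local Open Scope convex_scope.
Lemma powR_le_tangent (beta t : R) : 0 <= beta -> beta <= 1 -> 0 < t ->
  powR t beta <= beta * t + (1 - beta).
Proof.
move=> b0 b1 t0; have := @concave_ln R (Itv01 b0 b1) t 1 t0 ltr01.
have pos : 0 < beta * t + (1 - beta) by nra.
rewrite !convRE /= ln1 mulr0 addr0 mulr1 -ler_expR lnK ?posrE //.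
by rewrite /powR gt_eqF // mulrC.
Qed.
Local Close Scope convex_scope.

(* Concavity of [r ^ (1 - alpha)]: its chord over [[y, x]] is steeper than its tangent at [x]. *)
Lemma powR_diff_ge alpha x y : 0 <= alpha -> alpha < 1 -> 0 < y -> y <= x ->
  powR x (- alpha) * (x - y) <= (powR x (1 - alpha) - powR y (1 - alpha)) / (1 - alpha).
Proof.
move=> a0 a1 y0 yx; have x0 := lt_le_trans y0 yx.
have b0 : 0 < 1 - alpha by rewrite subr_gt0.
have t0 : 0 < y / x by rewrite divr_gt0.
have tan : powR (y / x) (1 - alpha) <= (1 - alpha) * (y / x) + (1 - (1 - alpha)).
  by apply: powR_le_tangent => //; lra.
have xA : powR x (- alpha) * x = powR x (1 - alpha).
  by rewrite -(mulr_powRB1 (ltW x0) b0) mulrC (_ : 1 - alpha - 1 = - alpha) //; ring.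
have -> : powR x (- alpha) * (x - y) = powR x (1 - alpha) * (1 - y / x).
  by rewrite -xA; field; rewrite gt_eqF.
rewrite -{2}(divfK (lt0r_neq0 x0) y) powRM ?(ltW t0) ?(ltW x0) // ler_pdivlMr //.
have := powR_gt0 (1 - alpha) x0; nra.
Qed.

End PowR.

Section Segments.
Context {R : realType} {n : nat}.
Implicit Types (p q z : 'rV[R]_n) (a b c t u v alpha : R).

Definition seg a b p q t : 'rV[R]_n := p + ((t - a) / (b - a)) *: (q - p).

Definition seglen a b p q t : R := (t - a) / (b - a) * enorm (q - p).

Lemma seg_a a b p q : seg a b p q a = p.
Proof. by rewrite /seg subrr mul0r scale0r addr0. Qed.

Lemma seg_b a b p q : a < b -> seg a b p q b = q.
Proof. by move=> ab; rewrite /seg divff ?scale1r ?subrKC // subr_eq0 gt_eqF. Qed.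

Lemma seg_conv a b p q t :
  seg a b p q t = (1 - (t - a) / (b - a)) *: p + ((t - a) / (b - a)) *: q.
Proof. by apply/rowP => i; rewrite !mxE; ring. Qed.

Lemma seg_ratio_ge0 a b u v : a < b -> u <= v -> 0 <= (v - u) / (b - a).
Proof. by move=> ab uv; apply: divr_ge0; rewrite subr_ge0 // ltW. Qed.

Lemma seg_ratio_le1 a b t : a < b -> t <= b -> (t - a) / (b - a) <= 1.
Proof. by move=> ab tb; rewrite ler_pdivrMr ?subr_gt0 // mul1r lerD2r. Qed.

Lemma seglen_a a b p q : seglen a b p q a = 0.
Proof. by rewrite /seglen subrr !mul0r. Qed.

Lemma seglen_b a b p q : a < b -> seglen a b p q b = enorm (q - p).
Proof. by move=> ab; rewrite /seglen divff ?mul1r // subr_eq0 gt_eqF. Qed.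

Lemma seglenB a b p q u v : a < b ->
  seglen a b p q v - seglen a b p q u = enorm (q - p) / (b - a) * (v - u).
Proof. by move=> ab; rewrite /seglen; field; rewrite subr_eq0 gt_eqF. Qed.

Lemma seglenB_ge0 a b p q u v : a < b -> u <= v ->
  0 <= seglen a b p q v - seglen a b p q u.
Proof.
by move=> ab uv; rewrite seglenB // -mulrA mulr_ge0 ?enorm_ge0 // mulrC seg_ratio_ge0.
Qed.

Lemma enorm_seg_subr a b p q u v : a < b -> u <= v ->
  enorm (seg a b p q v - seg a b p q u) = seglen a b p q v - seglen a b p q u.
Proof.
move=> ab uv; have -> : seg a b p q v - seg a b p q u = ((v - u) / (b - a)) *: (q - p).
  by apply/rowP => i; rewrite !mxE; ring.
rewrite enormZ ger0_norm ?seg_ratio_ge0 // seglenB //.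
ring.
Qed.

Lemma arc_cert_seg h a b p q Phi : a < b ->
  integral_majorant h (seg a b p q) (seglen a b p q) Phi a b ->
  (forall t, a <= t -> t <= b -> seg a b p q t != 0) ->
  arc_cert h (seg a b p q) (seglen a b p q) Phi (enorm (q - p) / (b - a)) a b.
Proof.
move=> ab I N; split => //.
  by move=> u v _ uv _; rewrite enorm_seg_subr // seglenB // lexx.
move=> t; rewrite le_eqVlt => /predU1P[<- _|at_ _].
  by exists [::]; rewrite ?subrr ?chord_sum_nil.
exists [:: t]; first by split; rewrite /= ?at_.
by rewrite chord_sum_cons chord_sum_nil addr0 enorm_seg_subr ?lexx ?ltW.
Qed.

Definition away_cost alpha p q : R :=
  powR (Num.min (enorm p) (enorm q) / 2) (- alpha) * enorm (q - p).

Lemma away_cost_ge0 alpha p q : 0 <= away_cost alpha p q.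
Proof. by rewrite mulr_ge0 ?powR_ge0 ?enorm_ge0. Qed.

Lemma away_costZ alpha e p q : 0 < e ->
  away_cost alpha (e *: p) (e *: q) = powR e (1 - alpha) * away_cost alpha p q.
Proof.
move=> e0; have e0' := ltW e0.
have eA : powR e (- alpha) * e = powR e (1 - alpha).
  rewrite -{2}(powRr1 e0') -powRD; first by rewrite addrC.
  by rewrite (lt0r_neq0 e0) implybT.
rewrite /away_cost !enormZ -scalerBr enormZ gtr0_norm // -minr_pMr // -mulrA.
by rewrite powRM ?divr_ge0 ?le_min ?enorm_ge0 // -eA; ring.
Qed.

(* For [0 <= dot p q] the cross term of [|(1 - l) p + l q|^2] is nonnegative, and
   [(1 - l)^2 + l^2 >= 1/2]. *)
Lemma enorm_conv_ge p q l m : 0 <= dot p q -> 0 <= l -> l <= 1 -> 0 <= m ->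
  m <= enorm p -> m <= enorm q -> m / 2 <= enorm ((1 - l) *: p + l *: q).
Proof.
move=> pq l0 l1 m0 mp mq.
rewrite -[m / 2]ger0_norm ?divr_ge0 // -sqrtr_sqr enormE ler_sqrt ?dotxx_ge0 //.
rewrite dotDl !dotDr !dotZl !dotZr (dotC q p).
have mp2 : m ^+ 2 <= dot p p by rewrite -enorm_sqr lerXn2r // nnegrE ?enorm_ge0.
have mq2 : m ^+ 2 <= dot q q by rewrite -enorm_sqr lerXn2r // nnegrE ?enorm_ge0.
have h1 : 0 <= (1 - l) ^+ 2 * (dot p p - m ^+ 2) by rewrite mulr_ge0 ?sqr_ge0 ?subr_ge0.
have h2 : 0 <= l ^+ 2 * (dot q q - m ^+ 2) by rewrite mulr_ge0 ?sqr_ge0 ?subr_ge0.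
have h3 : 0 <= l * (1 - l) * dot p q by rewrite !mulr_ge0 ?subr_ge0.
have h4 : 0 <= m ^+ 2 * (2 * l - 1) ^+ 2 by rewrite mulr_ge0 ?sqr_ge0.
nra.
Qed.

Lemma arc_integral_le_seg_away alpha a b p q : 0 <= alpha -> a < b -> p != 0 -> q != 0 ->
  0 <= dot p q -> arc_integral_le (weight alpha) (seg a b p q) a b (away_cost alpha p q).
Proof.
move=> a0 ab p0 q0 pq; set m := Num.min (enorm p) (enorm q).
have m2 : 0 < m / 2 by rewrite divr_gt0 // lt_min !enorm_gt0 p0 q0.
have far t : a <= t -> t <= b -> m / 2 <= enorm (seg a b p q t).
  move=> at_ tb; rewrite seg_conv enorm_conv_ge ?ge_min ?lexx ?orbT ?seg_ratio_ge0 //.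
    exact: seg_ratio_le1.
  by rewrite le_min !enorm_ge0.
exists (enorm (q - p) / (b - a)), (seglen a b p q),
  (fun t => powR (m / 2) (- alpha) * seglen a b p q t).
split; last by rewrite -mulrBr seglen_b // seglen_a subr0.
apply: arc_cert_seg => // [u v au uv vb w wlb|t at_ tb].
  rewrite -mulrBr ler_wpM2r ?seglenB_ge0 //.
  exact: le_trans (wlb u (lexx u) uv) (ge0_ler_powRN a0 m2 (far u au (le_trans uv vb))).
by rewrite -enorm_gt0 (lt_le_trans m2 (far t at_ tb)).
Qed.

Lemma arc_integral_le_seg_out alpha a b z c : 0 <= alpha -> alpha < 1 -> a < b ->
  z != 0 -> 0 < c -> c <= 1 ->
  arc_integral_le (weight alpha) (seg a b (c *: z) z) a b
    (powR (enorm z) (1 - alpha) / (1 - alpha)).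
Proof.
move=> a0 a1 ab z0 c0 c1; rewrite -enorm_gt0 in z0.
pose r t := enorm (seg a b (c *: z) z t).
have rE t : a <= t -> r t = (c + (t - a) / (b - a) * (1 - c)) * enorm z.
  move=> at_; have l0 := seg_ratio_ge0 ab at_.
  rewrite /r (_ : seg _ _ _ _ t = (c + (t - a) / (b - a) * (1 - c)) *: z).
    by rewrite enormZ ger0_norm // addr_ge0 ?(ltW c0) // mulr_ge0 // subr_ge0.
  by apply/rowP => i; rewrite !mxE; ring.
have rpos t : a <= t -> 0 < r t.
  by move=> at_; rewrite rE // mulr_gt0 //; have := seg_ratio_ge0 ab at_; nra.
have dS u v : a <= u -> a <= v ->
    seglen a b (c *: z) z v - seglen a b (c *: z) z u = r v - r u.
  move=> au av; rewrite seglenB // !rE // -{1}(scale1r z) -scalerBl enormZ ger0_norm.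
    by field; rewrite subr_eq0 gt_eqF.
  by rewrite subr_ge0.
exists (enorm (z - c *: z) / (b - a)), (seglen a b (c *: z) z),
  (fun t => powR (r t) (1 - alpha) / (1 - alpha)).
split => /=.
  apply: arc_cert_seg => // [u v au uv vb w wlb|t at_ _]; last by rewrite -enorm_gt0 rpos.
  have av := le_trans au uv; have dS0 := seglenB_ge0 (c *: z) z ab uv.
  rewrite dS // -mulrBl in dS0 *.
  apply: le_trans (powR_diff_ge a0 a1 (rpos u au) _); last by rewrite -subr_ge0.
  by apply: ler_wpM2r => //; apply: wlb.
rewrite /r seg_b // gerBl divr_ge0 ?powR_ge0 //.
by rewrite subr_ge0 ltW.
Qed.

Lemma arc_integral_le_seg_in alpha a b z c : 0 <= alpha -> alpha < 1 -> a < b ->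
  z != 0 -> 0 < c -> c <= 1 ->
  arc_integral_le (weight alpha) (seg a b z (c *: z)) a b
    (powR (enorm z) (1 - alpha) / (1 - alpha)).
Proof.
move=> a0 a1 ab z0 c0 c1; rewrite -enorm_gt0 in z0.
pose r t := enorm (seg a b z (c *: z) t).
have rE t : t <= b -> r t = (1 - (t - a) / (b - a) * (1 - c)) * enorm z.
  move=> tb; have l1 := seg_ratio_le1 ab tb.
  rewrite /r (_ : seg _ _ _ _ t = (1 - (t - a) / (b - a) * (1 - c)) *: z).
    by rewrite enormZ ger0_norm //; nra.
  by apply/rowP => i; rewrite !mxE; ring.
have rpos t : t <= b -> 0 < r t.
  by move=> tb; rewrite rE // mulr_gt0 //; have := seg_ratio_le1 ab tb; nra.
have dS u v : u <= b -> v <= b ->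
    seglen a b z (c *: z) v - seglen a b z (c *: z) u = r u - r v.
  move=> ub vb; rewrite seglenB // !rE // -{2}(scale1r z) -scalerBl enormZ ler0_norm.
    by field; rewrite subr_eq0 gt_eqF.
  by rewrite subr_le0.
exists (enorm (c *: z - z) / (b - a)), (seglen a b z (c *: z)),
  (fun t => - powR (r t) (1 - alpha) / (1 - alpha)).
split => /=.
  apply: arc_cert_seg => // [u v au uv vb w wlb|t _ tb]; last by rewrite -enorm_gt0 rpos.
  have ub := le_trans uv vb; have dS0 := seglenB_ge0 z (c *: z) ab uv.
  have -> : - powR (r v) (1 - alpha) / (1 - alpha) - - powR (r u) (1 - alpha) / (1 - alpha)
      = (powR (r u) (1 - alpha) - powR (r v) (1 - alpha)) / (1 - alpha) by ring.
  rewrite dS // in dS0 *.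
  apply: le_trans (powR_diff_ge a0 a1 (rpos v vb) _); last by rewrite -subr_ge0.
  by apply: ler_wpM2r => //; apply: wlb.
have : 0 <= powR (r b) (1 - alpha) / (1 - alpha).
  by rewrite divr_ge0 ?powR_ge0 // subr_ge0 ltW.
rewrite /r seg_a; lra.
Qed.

End Segments.

Lemma le_of_powR_slack {R : realType} (k : \bar R) (A C beta : R) : 0 < beta -> 0 <= C ->
  (forall e, 0 < e -> e <= 1 -> (k <= (A + powR e beta * C)%:E)%E) -> (k <= A%:E)%E.
Proof.
move=> b0 C0 H; apply/lee_addgt0Pr => d d0.
have dC : 0 < d / (C + 1) by rewrite divr_gt0 // ltr_wpDl.
pose e := Num.min 1 (powR (d / (C + 1)) beta^-1).
have e0 : 0 < e by rewrite lt_min ltr01 powR_gt0.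
have eb : powR e beta <= d / (C + 1).
  have e_le : e <= powR (d / (C + 1)) beta^-1 by rewrite ge_min lexx orbT.
  rewrite -[leRHS](powRr1 (ltW dC)) -[X in _ <= powR _ X](mulVf (lt0r_neq0 b0)) powRrM.
  by apply: (ge0_ler_powR (ltW b0) _ _ e_le); rewrite nnegrE ?powR_ge0 ?(ltW e0).
apply: le_trans (H e e0 _) _; first by rewrite ge_min lexx.
rewrite -EFinD lee_fin lerD2l; apply: le_trans (ler_wpM2r C0 eb) _.
by rewrite mulrAC ler_pdivrMr ?ltr_wpDl // ler_pM2l // lerDl.
Qed.

(* The path runs radially from [x] in to [e x], along the chords [e x -- e p -- e y], which
   stay away from the origin, and radially out to [y]; scaling the chords by [e] scales their
   cost by [e ^ (1 - alpha)]. *)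
Lemma k_alpha_le_detour {R : realType} {n : nat} (alpha e : R) (x y p : 'rV[R]_n) :
  0 <= alpha -> alpha < 1 -> x != 0 -> y != 0 -> p != 0 ->
  0 <= dot x p -> 0 <= dot p y -> 0 < e -> e <= 1 ->
  (k_alpha alpha x y <=
   ((powR (enorm x) (1 - alpha) + powR (enorm y) (1 - alpha)) / (1 - alpha)
    + powR e (1 - alpha) * (away_cost alpha x p + away_cost alpha p y))%:E)%E.
Proof.
move=> a0 a1 x0 y0 p0 xp py e0 e1.
have scale_neq0 (z : 'rV[R]_n) : z != 0 -> e *: z != 0.
  by move=> z0; rewrite scaler_eq0 negb_or gt_eqF.
have G1 := arc_integral_le_seg_in (a := 0) (b := 1/4) a0 a1 (ltac:(lra)) x0 e0 e1.
have G2 := arc_integral_le_seg_away (a := 1/4) (b := 1/2) a0 (ltac:(lra))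
  (scale_neq0 _ x0) (scale_neq0 _ p0) (ltac:(rewrite dotZl dotZr !mulr_ge0 // ltW //)).
have G3 := arc_integral_le_seg_away (a := 1/2) (b := 3/4) a0 (ltac:(lra))
  (scale_neq0 _ p0) (scale_neq0 _ y0) (ltac:(rewrite dotZl dotZr !mulr_ge0 // ltW //)).
have G4 := arc_integral_le_seg_out (a := 3/4) (b := 1) a0 a1 (ltac:(lra)) y0 e0 e1.
have G34 := arc_integral_le_glue G3 G4 (ltac:(lra)) (ltac:(lra))
  (ltac:(rewrite seg_a seg_b //; lra)).
have G234 := arc_integral_le_glue G2 G34 (ltac:(lra)) (ltac:(lra))
  (ltac:(rewrite glue_l ?seg_a ?seg_b //; lra)).
have G := arc_integral_le_glue G1 G234 (ltac:(lra)) (ltac:(lra))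
  (ltac:(rewrite glue_l ?seg_a ?seg_b //; lra)).
apply: k_alpha_le_arc (arc_integral_le_trans _ G) _ _.
- by rewrite !away_costZ //; lra.
- by rewrite glue_l ?seg_a.
- by rewrite !glue_gt ?seg_b //; lra.
Qed.

Theorem corollary3p3 (R : realType) (n : nat) (alpha : R)
  (hn : (2 <= n)%N) (ha0 : 0 <= alpha) (ha1 : alpha < 1)
  (x y : 'rV[R]_n) (hx : x != 0) (hy : y != 0) :
  (k_alpha alpha x y <=
   ((powR (enorm x) (1 - alpha) + powR (enorm y) (1 - alpha)) / (1 - alpha))%:E)%E.
Proof.
have [p p0 [xp py]] := exists_orthogonal_toward hn x y.
apply: (le_of_powR_slack (beta := 1 - alpha) (C := away_cost alpha x p + away_cost alpha p y)).
- by rewrite subr_gt0.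
- by rewrite addr_ge0 ?away_cost_ge0.
by move=> e e0 e1; apply: k_alpha_le_detour; rewrite ?xp.
Qed.
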